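(* Let $A$ be an abelian group of order $n$. The number of quadruples $(C,Z,S',S'')$ such that $C,Z$ are subgroups of $A$ with $A=C\times Z$, $C$ is cyclic of order $t\geq 4$, $Z$ is an elementary abelian $2$-group, $S'\in\{C,\emptyset,\{1\},C\setminus\{1\}\}$ and $S''\subseteq Z$, is at most $2^{n/4+2\log_2 n-1}$.
   Context: $A=C\times Z$ means $A$ is the internal direct product of its subgroups $C$ and $Z$; the trivial group counts as an elementary abelian $2$-group. *)

From mathcomp Require Import all_boot all_fingroup all_solvable.
From Stdlib Require Import Reals.
Set Implicit Arguments. Unset Strict Implicit. Unset Printing Implicit Defensive.
Open Scope group_scope.

Definition quads (gT : finGroupType) (A : {set gT})
  : {set {set gT} * {set gT} * {set gT} * {set gT}} :=
  [set q : {set gT} * {set gT} * {set gT} * {set gT} |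
     let: (C, Z, S1, S2) := q in
     [&& group_set C, group_set Z, C \x Z == A,
         cyclic C, 4 <= #|C|, 2.-abelem Z,
         S1 \in [:: C; set0; [set 1]; C :\ 1] & S2 \subset Z]].

(* For a fixed splitting (C, Z) there are at most 4 * 2 ^ #|Z| choices of
   (S', S''), and #|Z| <= n / 4 since #|C| >= 4.  It remains to show that
   there are at most n ^ 2 / 8 splittings:
   - a cyclic subgroup of order >= 3 has two distinct generators g, g^-1, and
     distinct cyclic subgroups have distinct generators, so there are at most
     n / 2 candidates for C;
   - for a fixed C and a fixed complement Z0, any elementary abelian 2-group
     complement Z of C meets Z0 with index at most 2 (Z0 embeds in A / Z,
     which is cyclic), so Z :&: Z0 is the kernel of an irreducible character
     of Z0; moreover Z is determined by Z :&: Z0, because a cyclic group has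
     at most one involution.  Hence there are at most #|Z0| = n / #|C| <= n / 4
     such complements.
   Altogether 2 * #quads <= 2 ^ (n %/ 4) * n ^ 2, and the real-valued bound
   2 ^ (n / 4 + 2 log2 n - 1) follows by elementary real analysis. *)

From mathcomp Require Import all_boot all_fingroup all_solvable all_algebra all_character.
Set Implicit Arguments. Unset Strict Implicit. Unset Printing Implicit Defensive.
Open Scope group_scope.

Section Splittings.
Variable gT : finGroupType.

Lemma cyclic_involution_uniq (C : {group gT}) (c c' : gT) :
  cyclic C -> c \in C -> c' \in C -> c ^+ 2 = 1 -> c' ^+ 2 = 1 ->
  c != 1 -> c' != 1 -> c = c'.
Proof.
move=> cycC Cc Cc' c2 c'2 ntc ntc'.
have order2 (x : gT) : x ^+ 2 = 1 -> x != 1 -> #[x] = 2.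
  move=> x2 ntx; apply/(prime_nt_dvdP (isT : prime 2)).
    by rewrite order_eq1.
  by rewrite order_dvdn x2.
have /eqP eq_cycles : <[c]> == <[c']> :> {set gT}.
  by rewrite (eq_subG_cyclic cycC) ?cycle_subG // -!orderE !order2.
have : c' \in <[c]> by rewrite eq_cycles cycle_id.
by rewrite cycle2g ?order2 // !inE (negPf ntc') eq_sym => /eqP.
Qed.

Lemma dprod_abelem2_sqr1 (A C Z : {group gT}) (x : gT) :
  C \x Z = A -> 2.-abelem Z -> x \in A -> x ^+ 2 = 1 ->
  exists c z, [/\ c \in C, z \in Z, c ^+ 2 = 1 & x = c * z].
Proof.
move=> CxZ /(abelemP (isT : prime 2))[_ expZ] Ax x2.
have [c [z [Cc Zz def_x _]]] := mem_dprod CxZ Ax.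
have [_ _ cZC _] := dprodP CxZ.
have czc : commute c z by apply: commute_sym; apply: (centP (subsetP cZC z Zz)).
exists c, z; split=> //.
by move: x2; rewrite def_x expgMn // (expZ z Zz) mulg1.
Qed.

(* Write z in Z as c * e (c in C, e in E) and e as
   c' * z' (c' in C, z' in Z'); c and c' have square 1, and if neither is 1
   they are the unique involution of C, so z = z'. *)
Lemma abelem2_complement_sub (A C Z Z' E : {group gT}) :
  cyclic C -> C \x Z = A -> C \x Z' = A -> C \x E = A ->
  2.-abelem Z -> 2.-abelem Z' -> 2.-abelem E ->
  Z :&: E = Z' :&: E -> Z \subset Z'.
Proof.
move=> cycC CxZ CxZ' CxE abZ abZ' abE eqI; apply/subsetP => z Zz.
have [_ _ _ trivCZ] := dprodP CxZ.
have inA (B : {group gT}) : C \x B = A -> B \subset A.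
  by case/dprodP=> _ <- _ _; rewrite mulG_subr.
have sqr1 (B : {group gT}) x : 2.-abelem B -> x \in B -> x ^+ 2 = 1.
  by case/(abelemP (isT : prime 2)) => _; apply.
have [c [e [Cc Ee c2 def_z]]] :=
  dprod_abelem2_sqr1 CxE abE (subsetP (inA _ CxZ) z Zz) (sqr1 _ _ abZ Zz).
have [c1 | ntc] := eqVneq c 1.
  have : z \in Z :&: E by rewrite inE Zz def_z c1 mul1g Ee.
  by rewrite eqI => /setIP[].
have [c' [z' [Cc' Z'z' c'2 def_e]]] :=
  dprod_abelem2_sqr1 CxZ' abZ' (subsetP (inA _ CxE) e Ee) (sqr1 _ _ abE Ee).
have [c'1 | ntc'] := eqVneq c' 1.
  have : e \in Z :&: E by rewrite eqI inE Ee def_e c'1 mul1g Z'z'.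
  case/setIP=> Ze _; have : c \in C :&: Z.
    by rewrite inE Cc -(mulgK e c) -def_z groupM ?groupV.
  by rewrite trivCZ inE (negPf ntc).
have eq_cc' := cyclic_involution_uniq cycC Cc Cc' c2 c'2 ntc ntc'.
by rewrite def_z def_e -eq_cc' mulgA -expg2 c2 mul1g.
Qed.

Lemma abelem2_complement_eq (A C Z Z' E : {group gT}) :
  cyclic C -> C \x Z = A -> C \x Z' = A -> C \x E = A ->
  2.-abelem Z -> 2.-abelem Z' -> 2.-abelem E ->
  Z :&: E = Z' :&: E -> Z = Z'.
Proof.
move=> cycC CxZ CxZ' CxE abZ abZ' abE eqI; apply/val_inj/eqP.
by rewrite eqEsubset (abelem2_complement_sub cycC CxZ CxZ' CxE)
  ?(abelem2_complement_sub cycC CxZ' CxZ CxE).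
Qed.

(* In A = C \x Z with C cyclic, an elementary abelian 2-subgroup E of A meets
   Z with index at most 2: E / Z is an elementary abelian 2-subgroup of the
   cyclic group A / Z, hence has order at most 2. *)
Lemma abelem2_index_dprod_le2 (A C Z E : {group gT}) :
  cyclic C -> C \x Z = A -> E \subset A -> 2.-abelem E -> #|E : E :&: Z| <= 2.
Proof.
move=> cycC CxZ sEA abE.
have [_ defA _ _] := dprodP CxZ.
have nZA : A \subset 'N(Z) by case/dprod_normal2: CxZ => _ /normal_norm.
have cycEZ : cyclic (E / Z).
  apply: cyclicS (quotientS Z sEA) _.
  by rewrite /= -defA quotientMidr quotient_cyclic.
have abEZ : 2.-abelem (E / Z) by apply: quotient_abelem.
rewrite indexgI -card_quotient ?(subset_trans sEA nZA) //.
rewrite (card_pgroup (abelem_pgroup abEZ)).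
by move: cycEZ; rewrite (abelem_cyclic abEZ); case: logn => [|[]].
Qed.

(* A normal subgroup of prime index is the kernel of an irreducible character
   (lifted from a faithful one of the quotient of prime order). *)
Lemma prime_index_cfker (G K : {group gT}) :
  K <| G -> prime #|G : K| -> exists i : Iirr G, cfker ('chi_i)%R = K.
Proof.
move=> nsKG prGK; have nKG := normal_norm nsKG.
have oGK : prime #|G / K| by rewrite card_quotient.
have ntGK : (G / K)%G :!=: 1 by rewrite -cardG_gt1 prime_gt1.
pose j : Iirr (G / K) := inord 1.
have kerj : cfker ('chi_j)%R = 1.
  have : G / K :&: cfker ('chi_j)%R = 1.
    by rewrite prime_TIg // subGcfker Iirr1_neq0.
  by move/setIidPr: (cfker_sub ('chi_j)%R) => ->.
exists (mod_Iirr j); rewrite mod_IirrE //.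
apply/eqP; rewrite eqEsubset cfker_mod // andbT.
rewrite -quotient_sub1; last exact: subset_trans (cfker_sub _) nKG.
by rewrite (quotient_cfker_mod set0) // kerj.
Qed.

Lemma index_le2_cfker (G K : {group gT}) :
  K <| G -> #|G : K| <= 2 -> exists i : Iirr G, cfker ('chi_i)%R = K.
Proof.
move=> nsKG le2.
have [iGK1 | iGKn1] := eqVneq #|G : K| 1%N.
  by exists 0%R; rewrite irr0 cfker_cfun1 (index1g (normal_sub nsKG) iGK1).
apply: prime_index_cfker => //; suff -> : #|G : K| = 2%N by [].
by apply/eqP; rewrite eqn_leq le2 ltn_neqAle eq_sym iGKn1 indexg_gt0.
Qed.

Definition cyclic_split (A : {set gT}) (p : {set gT} * {set gT}) : bool :=
  let: (C, Z) := p in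
  [&& group_set C, group_set Z, C \x Z == A, cyclic C, 4 <= #|C| & 2.-abelem Z].

(* A cyclic C has at most #|A| / #|C| elementary abelian 2-group complements
   in A: they are determined by their intersection with a fixed complement Z0,
   which is the kernel of one of the #|Z0| irreducible characters of Z0. *)
Lemma complements_count (A : {group gT}) (C : {set gT}) :
  #|C| * #|[set Z | cyclic_split A (C, Z)]| <= #|A|.
Proof.
set S := [set Z | _].
have [-> | [Z0 S_Z0]] := set_0Vmem S; first by rewrite cards0 muln0.
move: (S_Z0); rewrite inE => /and5P[gC gZ0 /eqP CxZ0 cycC /andP[_ abZ0]].
pose CG := Group gC; pose Z0G := Group gZ0.
have cycCG : cyclic CG := cycC.
have splitP Z : Z \in S -> exists ZG : {group gT},
    [/\ Z = ZG, CG \x ZG = A & 2.-abelem ZG].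
  rewrite inE => /and5P[_ gZ /eqP CxZ _ /andP[_ abZ]].
  by exists (Group gZ).
have abelZ0 : abelian Z0G := abelem_abelian abZ0.
have sZ0A : Z0G \subset A.
  by case/dprodP: CxZ0 => _ <- _ _; exact: (mulG_subr CG).
rewrite -(dprod_card CxZ0) leq_mul2l -[#|Z0|]/#|Z0G| -card_Iirr_abelian //.
apply/orP; right; rewrite -(card_in_imset (f := fun Z => Z :&: Z0)).
  rewrite -[#|Iirr Z0G|]cardsT.
  apply: leq_trans (leq_imset_card (fun i : Iirr Z0G => cfker ('chi_i)%R) _).
  apply/subset_leq_card/subsetP => _ /imsetP[Z /splitP[ZG [-> CxZ _] ->]].
  have nsI : (ZG :&: Z0G)%G <| Z0G by rewrite -sub_abelian_normal ?subsetIr.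
  have leI : #|Z0G : ZG :&: Z0G| <= 2.
    by have := abelem2_index_dprod_le2 cycCG CxZ sZ0A abZ0; rewrite setIC.
  have [i keri] := index_le2_cfker nsI leI.
  by apply/imsetP; exists i; rewrite ?inE ?keri.
move=> Z Z' /splitP[ZG [-> CxZ abZ]] /splitP[ZG' [-> CxZ' abZ']] eqI.
by rewrite (abelem2_complement_eq (E := Z0G) cycCG CxZ CxZ' CxZ0 abZ abZ' abZ0 eqI).
Qed.

Definition big_cycles (k : nat) (A : {set gT}) : {set {set gT}} :=
  [set C : {set gT} | [&& group_set C, cyclic C, k <= #|C| & C \subset A]].

Definition cycle_gen (C : {set gT}) : gT := odflt 1 [pick x | C == <[x]>].

Lemma cycle_genE (C : {set gT}) : cyclic C -> <[cycle_gen C]> = C.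
Proof.
case/cyclicP=> x defC; rewrite /cycle_gen; case: pickP => [y /eqP -> // | /(_ x)].
by rewrite defC eqxx.
Qed.

(* Each cyclic subgroup of order at least 3 has two distinct generators
   g and g^-1, and these generators determine the subgroup, so there are at
   most #|A| / 2 such subgroups. *)
Lemma big_cycles_count (k : nat) (A : {group gT}) :
  2 < k -> 2 * #|big_cycles k A| <= #|A|.
Proof.
move=> k_gt2; pose f (Cb : {set gT} * bool) :=
  if Cb.2 then cycle_gen Cb.1 else (cycle_gen Cb.1)^-1.
have cycle_f Cb : Cb.1 \in big_cycles k A -> <[f Cb]> = Cb.1.
  rewrite inE => /and4P[_ cycC _ _].
  by rewrite /f; case: Cb.2; rewrite ?cycleV cycle_genE.
rewrite mulnC -[2]card_bool -cardsT -cardsX -(card_in_imset (f := f)).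
  apply/subset_leq_card/subsetP => _ /imsetP[[C b] /setXP[bigC _] ->].
  have /= defC := cycle_f (C, b) bigC.
  move: bigC; rewrite inE => /and4P[_ _ _ sCA].
  by apply: (subsetP sCA); rewrite -[in X in _ \in X]defC cycle_id.
move=> [C b] [C' b'] /setXP[bigC _] /setXP[bigC' _] eq_f.
have eqC : C = C'.
  have /= <- := cycle_f (C, b) bigC.
  by have /= <- := cycle_f (C', b') bigC'; rewrite eq_f.
subst C'; congr (_, _).
move: bigC; rewrite inE => /and4P[_ cycC leC _].
have gen_neqV : cycle_gen C != (cycle_gen C)^-1.
  apply/eqP=> eqV.
  have : #[cycle_gen C] %| 2 by rewrite order_dvdn expg2 {1}eqV mulVg.
  move/(dvdn_leq (isT : 0 < 2)); rewrite orderE cycle_genE //.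
  by move/(leq_trans (leq_trans k_gt2 leC)).
case: b b' eq_f => [] []; rewrite /f //= => eqV; move: gen_neqV.
- by rewrite -eqV eqxx.
- by rewrite eqV eqxx.
Qed.

(* There are at most #|A| ^ 2 / 8 splittings: at most #|A| / 2 choices for C
   and, for each of them, at most #|A| / 4 choices for Z. *)
Lemma cyclic_splits_count (A : {group gT}) :
  8 * #|[set p | cyclic_split A p]| <= #|A| ^ 2.
Proof.
rewrite -sum1dep_card (partition_big (fun p => p.1) (mem (big_cycles 4 A))) /=;
  last first.
  move=> [C Z] /and5P[gC gZ /eqP CxZ cycC /andP[leC _]].
  rewrite inE gC cycC leC /=; have [_ <- _ _] := dprodP CxZ.
  exact: (mulG_subl (Group gZ)).
rewrite big_distrr /= expnS mulnC.
apply: (@leq_trans (\sum_(C in big_cycles 4 A) 2 * #|A|)).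
  apply: leq_sum => C bigC.
  rewrite sum1dep_card -[8]/(2 * 4)%N -mulnA leq_mul2l /=.
  apply: leq_trans (complements_count A C); rewrite leq_mul //.
    by move: bigC; rewrite inE => /and4P[].
  apply: leq_trans (leq_imset_card (fun Z => (C, Z)) _).
  apply/subset_leq_card/subsetP => -[C' Z] /[!inE] /andP[splitCZ /eqP /= eqC'].
  by apply/imsetP; exists Z; rewrite ?inE -?eqC'.
by rewrite sum_nat_const mulnA leq_mul2r mulnC big_cycles_count ?orbT.
Qed.

Lemma quads_le_sum (A : {set gT}) :
  #|quads A| <= \sum_(p | cyclic_split A p) 4 * 2 ^ #|p.2|.
Proof.
rewrite -sum1_card (partition_big (fun q => q.1.1) (cyclic_split A)); last first.
  move=> [[[C Z] S1] S2]; rewrite /cyclic_split inE /=.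
  by case/and5P=> -> -> -> -> /and4P[-> -> _ _].
apply: leq_sum => -[C Z] _; rewrite sum1dep_card.
pose S1s := [set S | S \in [:: C; set0; [set 1]; C :\ 1]].
apply: (@leq_trans #|setX S1s (powerset Z)|).
  rewrite -(card_in_imset (f := fun q => (q.1.2, q.2))); last first.
    move=> [[[C1 Z1] S1] S2] [[[C2 Z2] T1] T2] /[!inE] /andP[_ /eqP[-> ->]].
    by case/andP=> _ /eqP[-> ->] [-> ->].
  apply/subset_leq_card/subsetP => y /imsetP[[[[C' Z'] S1] S2]].
  rewrite !inE /= => /andP[quad /eqP[eqC eqZ]] ->; subst C' Z'.
  by case/and5P: quad => _ _ _ _ /and4P[_ _ -> ->].
rewrite cardsX card_powerset leq_mul2r; apply/orP; right.
by rewrite cardsE (leq_trans (card_size _)).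
Qed.

Lemma quads_count (A : {group gT}) :
  2 * #|quads A| <= 2 ^ (#|A| %/ 4) * #|A| ^ 2.
Proof.
set P := (2 ^ (#|A| %/ 4))%N; set splits := [set p | cyclic_split A p].
rewrite -(leq_pmul2l (isT : 0 < 4)) mulnA.
apply: leq_trans (leq_mul (leqnn 8) (quads_le_sum A)) _.
have le_sum : \sum_(p | cyclic_split A p) 4 * 2 ^ #|p.2| <= #|splits| * (4 * P).
  rewrite -sum_nat_cond_const; apply: leq_sum => -[C Z].
  move=> /and5P[_ _ /eqP CxZ _ /andP[leC _]].
  rewrite leq_mul2l leq_pexp2l // leq_divRL // -(dprod_card CxZ).
  by rewrite [(#|C| * _)%N]mulnC leq_mul2l leC orbT.
apply: leq_trans (leq_mul (leqnn 8) le_sum) _.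
rewrite mulnA mulnC [X in _ <= X]mulnA leq_mul2l.
by rewrite cyclic_splits_count orbT.
Qed.
End Splittings.

From Stdlib Require Import Reals Lra.

Lemma INR_expn (m k : nat) : INR (expn m k) = (INR m ^ k)%R.
Proof. by elim: k => [|k IHk] //; rewrite expnS mulnE mult_INR IHk. Qed.

Lemma Rpower2_log2 (x : R) : (0 < x)%R -> Rpower 2 (ln x / ln 2) = x.
Proof.
move=> x_gt0; have ln2_gt0 : (0 < ln 2)%R by have := ln_lt_2; lra.
rewrite /Rpower (_ : (ln x / ln 2 * ln 2 = ln x)%R) ?exp_ln //.
by field; lra.
Qed.

(* The real-valued form of the combinatorial bound 2 q <= 2 ^ (n / 4) * n ^ 2
   (nat exponentiation is written expn, as Reals rebinds the nat notation ^). *)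
Lemma real_bound (q n : nat) : (0 < n)%N ->
  (2 * q <= expn 2 (n %/ 4) * expn n 2)%N ->
  (INR q <= Rpower 2 (INR n / 4 + 2 * (ln (INR n) / ln 2) - 1))%R.
Proof.
move=> n_gt0 le_q; have n_gtR0 : (0 < INR n)%R by apply/lt_0_INR/ltP.
set m := (n %/ 4)%N in le_q.
have le_qR : (2 * INR q <= 2 ^ m * (INR n * INR n))%R.
  move/leP/le_INR: le_q; rewrite !mulnE !mult_INR !INR_expn /=.
  by have -> : (1 + 1 = 2)%R by lra.
have le_mR : (INR m <= INR n / 4)%R.
  have /leP/le_INR : (m * 4 <= n)%N by rewrite leq_trunc_div.
  rewrite mult_INR !S_INR /=; lra.
have le_pow : (2 ^ m <= Rpower 2 (INR n / 4))%R.
  by rewrite -Rpower_pow; [apply: Rle_Rpower => //; lra | lra].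
have -> : Rpower 2 (INR n / 4 + 2 * (ln (INR n) / ln 2) - 1)
    = (Rpower 2 (INR n / 4) * (INR n * INR n) / 2)%R.
  set l := (ln (INR n) / ln 2)%R.
  rewrite /Rminus (_ : 2 * l = l + l)%R; last ring.
  by rewrite !Rpower_plus Rpower_Ropp Rpower_1 ?Rpower2_log2 //; lra.
have le_powR : (2 ^ m * (INR n * INR n) <= Rpower 2 (INR n / 4) * (INR n * INR n))%R.
  by apply: Rmult_le_compat_r => //; nra.
lra.
Qed.

Theorem lemma5p3 (gT : finGroupType) (A : {group gT}) (n : nat) :
  abelian A -> #|A| = n ->
  (INR #|quads A| <= Rpower 2 (INR n / 4 + 2 * (ln (INR n) / ln 2) - 1))%R.
Proof.
move=> _ <-; apply: real_bound; first exact: cardG_gt0.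
exact: quads_count.
Qed.
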